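(* Let $M$ be a topological space and $E:\mathbb{R}\to\mathcal{T}(M)$ a spectral family in the lattice $\mathcal{T}(M)$ of open subsets of $M$, with admissible domain $\mathcal{D}(E)$ and induced function $f_E:\mathcal{D}(E)\to\mathbb{R}$. Then $\mathrm{sp}(E)=\overline{\mathrm{im}\, f_E}$.
   Context: In $\mathcal{T}(M)$, $\bigvee_\alpha U_\alpha=\bigcup_\alpha U_\alpha$ and $\bigwedge_\alpha U_\alpha=\mathrm{int}\bigcap_\alpha U_\alpha$. A spectral family in $\mathcal{T}(M)$ is a map $E:\mathbb{R}\to\mathcal{T}(M)$ with $E_\lambda\subseteq E_\mu$ for $\lambda\le\mu$, $E_\lambda=\bigwedge_{\mu>\lambda}E_\mu$, $\bigwedge_\lambda E_\lambda=\emptyset$, $\bigcup_\lambda E_\lambda=M$. Its admissible domain is $\mathcal{D}(E)=\{x\in M\mid\exists\lambda: x\notin E_\lambda\}$, and the induced function is $f_E(x)=\inf\{\lambda\in\mathbb{R}\mid x\in E_\lambda\}$ for $x\in\mathcal{D}(E)$. The resolvent set $R(E)$ is the set of $\lambda\in\mathbb{R}$ such that $E$ is constant on a neighbourhood of $\lambda$, and $\mathrm{sp}(E)=\mathbb{R}\setminus R(E)$. *)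

From HB Require Import structures.
From mathcomp Require Import all_boot all_order all_algebra.
From mathcomp Require Import all_classical all_reals all_analysis.
Set Implicit Arguments. Unset Strict Implicit. Unset Printing Implicit Defensive.
Import Order.TTheory GRing.Theory Num.Theory.
Import numFieldNormedType.Exports.
Local Open Scope classical_set_scope.
Local Open Scope ring_scope.

(* The lattice T(M) of open subsets of a topological space M:
   join = union, meet = interior of the intersection. *)

Definition spectral_family (R : realType) (M : topologicalType)
  (E : R -> set M) : Prop :=
  [/\ (forall l, open (E l)),
      (forall l m, l <= m -> E l `<=` E m),
      (forall l, E l = interior (\bigcap_(m in [set m | l < m]) E m)),
      interior (\bigcap_(l in [set: R]) E l) = set0 &
      \bigcup_(l in [set: R]) E l = [set: M] ].

Definition adm_domain (R : realType) (M : topologicalType) (E : R -> set M)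
  : set M := [set x | exists l, ~ E l x].

Definition induced_fun (R : realType) (M : topologicalType) (E : R -> set M)
  (x : M) : R := inf [set l | E l x].

Definition resolvent (R : realType) (M : topologicalType) (E : R -> set M)
  : set R := [set l : R | \forall m \near l, E m = E l].

Definition spectrum (R : realType) (M : topologicalType) (E : R -> set M)
  : set R := ~` resolvent E.

From mathcomp Require Import all_boot all_order all_algebra.
From mathcomp Require Import all_classical all_reals all_analysis.
From mathcomp Require Import lra.
Import numFieldNormedType.Exports.
Import Order.TTheory GRing.Theory Num.Theory.
Local Open Scope classical_set_scope.
Local Open Scope ring_scope.

(* A point x of
   D(E) enters the family exactly at f_E(x): x lies in E_l for l > f_E(x) and
   not for l < f_E(x).  Hence E jumps across every value of f_E, while on an
   interval free of values of f_E it is constant.  So the resolvent set is the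
   interior of the complement of im f_E, i.e. sp(E) is the closure of im f_E. *)

Lemma ballRP (R : realType) (x e y : R) : ball x e y <-> x - e < y < x + e.
Proof. by rewrite ball_itv /= in_itv. Qed.

Section InducedFunction.
Variables (R : realType) (M : topologicalType) (E : R -> set M).
Hypothesis E_mono : forall l m, l <= m -> E l `<=` E m.
Hypothesis E_cover : \bigcup_(l in [set: R]) E l = [set: M].

Lemma induced_fun_le {l x} : adm_domain E x -> E l x -> induced_fun E x <= l.
Proof.
case=> l0 nEl0x Elx; apply: ge_inf => //; exists l0 => m Emx.
by rewrite leNgt; apply/negP => /ltW /E_mono /(_ x Emx).
Qed.

Lemma mem_gt_induced_fun m x : induced_fun E x < m -> E m x.
Proof.
have : (\bigcup_(l in [set: R]) E l) x by rewrite E_cover.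
case=> l _ Elx /(inf_lt (ex_intro _ l Elx))[l' El'x lt_l'm].
exact: E_mono (ltW lt_l'm) _ El'x.
Qed.

Lemma spectral_neq_at_image {a b x} :
  adm_domain E x -> a < induced_fun E x < b -> E a <> E b.
Proof.
move=> Dx /andP[lt_af lt_fb] Eab.
have Eax : E a x by rewrite Eab; exact: mem_gt_induced_fun.
by have := induced_fun_le Dx Eax; rewrite leNgt lt_af.
Qed.

Lemma spectral_eq_of_image_gap a b : a <= b ->
  (forall x, adm_domain E x -> ~ (a <= induced_fun E x <= b)) -> E b = E a.
Proof.
move=> le_ab gap; apply/seteqP; split; last exact: E_mono.
move=> x Ebx; have [Dx|nDx] := pselect (adm_domain E x); last first.
  by apply: contra_notP nDx; exists a.
apply: mem_gt_induced_fun; rewrite ltNge; apply/negP => le_af.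
by apply: (gap x Dx); rewrite le_af (induced_fun_le Dx Ebx).
Qed.

Lemma resolvent_interior_image :
  resolvent E = interior (~` (induced_fun E @` adm_domain E)).
Proof.
apply/seteqP; split=> lam /nbhs_ballP[e /= e_gt0 Be]; apply/nbhs_ballP.
- exists e => // y + [x Dx fxy]; rewrite -fxy => /ballRP/andP[lo hi].
  have Ba : ball lam e ((lam - e + induced_fun E x) / 2) by apply/ballRP; lra.
  have Bb : ball lam e ((induced_fun E x + (lam + e)) / 2) by apply/ballRP; lra.
  have lt_afb : (lam - e + induced_fun E x) / 2 < induced_fun E x
                < (induced_fun E x + (lam + e)) / 2 by apply/andP; split; lra.
  by apply: (spectral_neq_at_image Dx lt_afb); rewrite (Be _ Ba) (Be _ Bb).
- have gap a b : lam - e < a -> b < lam + e ->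
      forall x, adm_domain E x -> ~ (a <= induced_fun E x <= b).
    move=> lo hi x Dx /andP[le_af le_fb]; apply: (Be (induced_fun E x)).
      by apply/ballRP; lra.
    by exists x.
  exists e => // m /ballRP/andP[lo hi].
  have [le_lm|le_ml] := orP (le_total lam m).
  + by apply: spectral_eq_of_image_gap le_lm (gap _ _ _ hi); lra.
  + by symmetry; apply: spectral_eq_of_image_gap le_ml (gap _ _ lo _); lra.
Qed.

End InducedFunction.

Theorem proposition2p30 (R : realType) (M : topologicalType) (E : R -> set M) :
  spectral_family E ->
  spectrum E = closure (induced_fun E @` adm_domain E).
Proof.
case=> _ E_mono _ _ E_cover.
by rewrite /spectrum resolvent_interior_image // interiorC setCK.
Qed.
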